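(* Let $G=(V,E)$ be a finite graph without isolated vertices, let $p\in[0,1]$, $t\ge0$, let $\bar{\mathbf x}\in\{\mathcal R,\mathcal B\}^V$ be a configuration and $u\in V$. For $k\in\mathbb N$ let $\mathcal E_k$ be the event that $x_u^{(t+1)}\neq\mathcal B$ under the $(k,p,\mathcal B)$-Edge-Majority dynamics. Then for every $h\in\mathbb N_0$, $$\Pr(\mathcal E_{2h+1}\mid \mathbf X^{(t)}=\bar{\mathbf x})=\Pr(\mathcal E_{2h+2}\mid \mathbf X^{(t)}=\bar{\mathbf x}).$$ The same identity holds when $\mathcal E_k$ is defined with respect to the $(k,p,\mathcal B)$-Node-Majority dynamics instead.
   Context: States are in $\{\mathcal R,\mathcal B\}$; $x_u^{(t)}$ is the state of node $u$ at round $t$ and $\mathbf X^{(t)}$ the configuration at round $t$. $(k,p,\mathcal B)$-Edge-Majority: at each round every node $u$ independently samples $k$ neighbours uniformly at random with replacement; for each sampled neighbour $v$, independently, $u$ sees $v$ as $\mathcal B$ with probability $p$ and otherwise sees $v$'s true current state; $u$'s next state is the state seen more often in the sample, ties broken uniformly at random. $(k,p,\mathcal B)$-Node-Majority: at each round every node $u$ independently samples $k$ neighbours uniformly at random with replacement and draws an independent Bernoulli($p$) variable $M$; if $M=1$ its next state is $\mathcal B$; otherwise its next state is the majority among the true current states of the sampled neighbours, ties broken uniformly at random. *)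

From HB Require Import structures.
From mathcomp Require Import all_boot all_order all_algebra.
Set Implicit Arguments. Unset Strict Implicit. Unset Printing Implicit Defensive.
Import Order.TTheory GRing.Theory Num.Theory.
Local Open Scope ring_scope.

Definition state := bool.
Definition Blue : state := true.
Definition Red : state := false.

Definition nbhd (V : finType) (e : rel V) (u : V) : {set V} := [set v | e u v].

Definition bern (R : pzRingType) (q : R) (b : bool) : R := if b then q else 1 - q.

Definition sample_w (R : fieldType) (V : finType) (e : rel V) (u : V) (k : nat)
  (s : {ffun 'I_k -> V}) : R :=
  if [forall i, s i \in nbhd e u] then (#|nbhd e u|%:R ^-1) ^+ k else 0.

(* Majority of the seen states; ties broken by the fair coin c. *)
Definition majority (k : nat) (seen : 'I_k -> state) (c : bool) : state :=
  let nB := #|[set i | seen i == Blue]| in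
  let nR := #|[set i | seen i == Red]| in
  if (nR < nB)%N then Blue else if (nB < nR)%N then Red else c.

(* Randomness of u: sampled neighbours s,
   independent noise flags f (f i = true: v seen as Blue), tie coin c. *)
Definition edge_kernel (R : fieldType) (V : finType) (e : rel V) (p : R) (k : nat)
  (x : {ffun V -> state}) (u : V) (b : state) : R :=
  \sum_(s : {ffun 'I_k -> V}) \sum_(f : {ffun 'I_k -> bool}) \sum_(c : bool)
    sample_w R e u s * (\prod_(i < k) bern p (f i)) * bern (2%:R ^-1) c *
    (if majority (fun i => if f i then Blue else x (s i)) c == b then 1 else 0).

Definition node_kernel (R : fieldType) (V : finType) (e : rel V) (p : R) (k : nat)
  (x : {ffun V -> state}) (u : V) (b : state) : R :=
  \sum_(s : {ffun 'I_k -> V}) \sum_(M : bool) \sum_(c : bool)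
    sample_w R e u s * bern p M * bern (2%:R ^-1) c *
    (if (if M then Blue else majority (fun i => x (s i)) c) == b then 1 else 0).

(* One-round transition: nodes update independently, so
   Pr(X^(t+1) = y | X^(t) = x) = prod_w K x w (y w). *)
Definition transition (R : fieldType) (V : finType)
  (K : {ffun V -> state} -> V -> state -> R)
  (x y : {ffun V -> state}) : R := \prod_(w : V) K x w (y w).

Definition prob_not_blue (R : fieldType) (V : finType)
  (K : {ffun V -> state} -> V -> state -> R) (x : {ffun V -> state}) (u : V) : R :=
  \sum_(y : {ffun V -> state} | y u != Blue) transition K x y.

(* Both dynamics reduce to a majority vote, with a fair coin for ties, over k
   independent samples that are each seen Blue with one and the same
   probability q: for Edge-Majority a sample is a pair (neighbour, noise
   flag), and Node-Majority consults the vote only when M = 0.  Hence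
   Pr(Red) = Pr(Bin(k, q) < k/2) + [k even] Pr(Bin(k, q) = k/2) / 2.  Going
   from k = 2h+1 to 2h+2 lowers the first term by q Pr(Bin(2h+1, q) = h), and
   the tie term is exactly that much, because the two middle terms of
   Bin(2h+1, q) satisfy q P(h) = (1-q) P(h+1). *)

From HB Require Import structures.
From mathcomp Require Import all_boot all_order all_algebra.
From mathcomp Require Import zify ring.
Set Implicit Arguments. Unset Strict Implicit. Unset Printing Implicit Defensive.
Import Order.TTheory GRing.Theory Num.Theory.
Local Open Scope ring_scope.

Section Binomial.
Variables (R : comPzRingType) (q : R).

Definition bin_pmf (k j : nat) : R := 'C(k, j)%:R * q ^+ j * (1 - q) ^+ (k - j).

Definition binomial_cdf (k n : nat) : R := \sum_(0 <= j < n) bin_pmf k j.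

Lemma bin_pmfS0 k : bin_pmf k.+1 0 = (1 - q) * bin_pmf k 0.
Proof. by rewrite /bin_pmf !bin0 !subn0 exprS; ring. Qed.

Lemma bin_pmfSS k j : bin_pmf k.+1 j.+1 = q * bin_pmf k j + (1 - q) * bin_pmf k j.+1.
Proof.
rewrite /bin_pmf binS natrD subSS.
have [lt_jk | le_kj] := ltnP j k.
  by rewrite -(subnSK lt_jk) !exprS; ring.
by rewrite bin_small ?ltnS // exprS; ring.
Qed.

Lemma binomial_cdfS k n :
  binomial_cdf k.+1 n.+1 = binomial_cdf k n.+1 - q * bin_pmf k n.
Proof.
rewrite /binomial_cdf big_nat_recl // bin_pmfS0.
under eq_bigr do rewrite bin_pmfSS.
rewrite big_split /= -!mulr_sumr.
transitivity ((1 - q) * (bin_pmf k 0 + \sum_(0 <= j < n) bin_pmf k j.+1)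
              + q * (\sum_(0 <= j < n) bin_pmf k j + bin_pmf k n) - q * bin_pmf k n).
  by ring.
by rewrite -big_nat_recl // -big_nat_recr //=; ring.
Qed.

Lemma bin_pmf_mid h : q * bin_pmf (2 * h + 1) h = (1 - q) * bin_pmf (2 * h + 1) h.+1.
Proof.
have le_h : (h <= 2 * h + 1)%N by lia.
rewrite /bin_pmf -(bin_sub le_h).
have -> : (2 * h + 1 - h = h.+1)%N by lia.
have -> : (2 * h + 1 - h.+1 = h)%N by lia.
by rewrite !exprS; ring.
Qed.

End Binomial.

Section Counting.
Variable R : comPzSemiRingType.

Lemma sum_set_card (I : finType) (F : nat -> R) :
  \sum_(A : {set I}) F #|A| = \sum_(0 <= j < #|I|.+1) 'C(#|I|, j)%:R * F j.
Proof.
rewrite big_mkord (partition_big (fun A : {set I} => inord #|A| : 'I_#|I|.+1) predT) //=.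
apply: eq_bigr => j _.
rewrite (eq_bigl (fun A : {set I} => #|A| == j)) => [|A]; last first.
  by rewrite -val_eqE /= inordK // ltnS max_card.
rewrite (eq_bigr (fun _ => F j)) => [|A /eqP -> //].
rewrite sumr_const mulr_natl -card_draws; congr (_ *+ _).
by apply: eq_card => A; rewrite inE.
Qed.

Lemma sum_ffun_bool_card (I : finType) (F : nat -> R) :
  \sum_(g : {ffun I -> bool}) F #|[set i | g i]|
    = \sum_(0 <= j < #|I|.+1) 'C(#|I|, j)%:R * F j.
Proof.
rewrite -sum_set_card (reindex (fun A : {set I} => [ffun i => i \in A])) /=.
  by apply: eq_bigr => A _; congr F; apply: eq_card => i; rewrite inE ffunE.
exists (fun g : {ffun I -> bool} => [set i | g i]) => [A _ | g _].
  by apply/setP => i; rewrite inE ffunE.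
by apply/ffunP => i; rewrite ffunE inE.
Qed.

Lemma sum_fibers (A B : finType) (phi : A -> B) (W : A -> R) :
  \sum_(b : B) \sum_(a | phi a == b) W a = \sum_(a : A) W a.
Proof. by rewrite [RHS](partition_big phi predT). Qed.

Lemma sum_prod_ffun_comp (I A B : finType) (W : A -> R) (phi : A -> B)
    (F : {ffun I -> B} -> R) :
  \sum_(f : {ffun I -> A}) (\prod_i W (f i)) * F [ffun i => phi (f i)]
    = \sum_(g : {ffun I -> B}) (\prod_i \sum_(a | phi a == g i) W a) * F g.
Proof.
rewrite (partition_big (fun f : {ffun I -> A} => [ffun i => phi (f i)]) predT) //=.
apply: eq_bigr => g _; rewrite bigA_distr_big_dep mulr_suml.
apply: eq_big => [f | f /eqP <- //].
apply/eqP/familyP => [<- i | phi_f]; first by rewrite unfold_in ffunE.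
by apply/ffunP => i; rewrite ffunE; apply/eqP/(phi_f i).
Qed.

Lemma sum_ffun_pair (I A B : finType) (G : {ffun I -> A} -> {ffun I -> B} -> R) :
  \sum_(s : {ffun I -> A}) \sum_(f : {ffun I -> B}) G s f
    = \sum_(sf : {ffun I -> A * B}) G [ffun i => (sf i).1] [ffun i => (sf i).2].
Proof.
rewrite pair_bigA (reindex (fun sf : {ffun I -> A * B} =>
  ([ffun i => (sf i).1], [ffun i => (sf i).2]))) //=.
exists (fun sf : {ffun I -> A} * {ffun I -> B} => [ffun i => (sf.1 i, sf.2 i)]).
  by move=> sf _; apply/ffunP => i; rewrite !ffunE; case: (sf i).
by move=> [s f] _; congr (_, _); apply/ffunP => i; rewrite !ffunE.
Qed.

End Counting.

Section MajorityLaw.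
Variable R : numFieldType.

Lemma sum_bern (q : R) : \sum_(b : bool) bern q b = 1.
Proof. by rewrite big_bool /bern /= addrC subrK. Qed.

Definition fair_majority k (seen : 'I_k -> state) (b : state) : R :=
  \sum_(c : bool) bern 2%:R^-1 c * (if majority seen c == b then 1 else 0).

Definition majority_law (L : state -> R) k (b : state) : R :=
  \sum_(g : {ffun 'I_k -> state}) (\prod_i L (g i)) * fair_majority g b.

Definition red_weight (k j : nat) : R :=
  if (j < k - j)%N then 1 else if (k - j < j)%N then 0 else 2%:R^-1.

Lemma eq_fair_majority k (g1 g2 : 'I_k -> state) b :
  g1 =1 g2 -> fair_majority g1 b = fair_majority g2 b.
Proof.
move=> eq_g; have seen_eq s : [set i | g1 i == s] = [set i | g2 i == s].
  by apply/setP => i; rewrite !inE eq_g.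
by rewrite /fair_majority /majority !seen_eq.
Qed.

Lemma sum_fair_majority k (g : 'I_k -> state) : \sum_b fair_majority g b = 1.
Proof.
rewrite exchange_big /= -[RHS](sum_bern 2%:R^-1); apply: eq_bigr => c _.
by rewrite -mulr_sumr big_bool; case: (majority g c); rewrite /= ?addr0 ?add0r mulr1.
Qed.

Lemma fair_majority_red k (g : 'I_k -> state) :
  fair_majority g Red = red_weight k #|[set i | g i]|.
Proof.
rewrite /fair_majority /majority /red_weight.
have -> : [set i | g i] = [set i | g i == Blue] by apply/setP => i; rewrite !inE eqb_id.
have -> : [set i | g i == Red] = ~: [set i | g i == Blue].
  by apply/setP => i; rewrite !inE; case: (g i).
rewrite cardsCs setCK card_ord big_bool /bern.
by case: ltnP => lt1; case: ltnP => lt2 /=; [lia | field..].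
Qed.

Lemma prod_bern_card (I : finType) (q : R) (g : {ffun I -> bool}) :
  \prod_i bern q (g i) = q ^+ #|[set i | g i]| * (1 - q) ^+ (#|I| - #|[set i | g i]|).
Proof.
rewrite (bigID g) /=; congr (_ * _).
  by rewrite (eq_bigr (fun=> q)) => [|i ->//]; rewrite prodr_const cardsE.
rewrite (eq_bigr (fun=> 1 - q)) => [|i /negbTE ->//].
rewrite prodr_const -(cardC [set i | g i]) addKn.
by congr (_ ^+ _); apply: eq_card => i; rewrite !inE.
Qed.

Lemma sum_majority_law L k :
  \sum_b L b = 1 -> \sum_b majority_law L k b = 1.
Proof.
move=> sum_L; rewrite exchange_big /=.
under eq_bigr do rewrite -mulr_sumr sum_fair_majority mulr1.
by rewrite -(bigA_distr_bigA (fun (_ : 'I_k) b => L b)) big1.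
Qed.

Lemma majority_law_bern L k :
  \sum_b L b = 1 -> majority_law L k =1 majority_law (bern (L Blue)) k.
Proof.
rewrite big_bool => sum_L b; apply: eq_bigr => g _; congr (_ * _).
apply: eq_bigr => i _; case: (g i) => //=.
by rewrite -sum_L addrC addKr.
Qed.

Lemma majority_law_bern_red q k :
  majority_law (bern q) k Red = \sum_(0 <= j < k.+1) bin_pmf q k j * red_weight k j.
Proof.
rewrite /majority_law.
under eq_bigr do rewrite prod_bern_card fair_majority_red card_ord.
rewrite (sum_ffun_bool_card _ (fun j => q ^+ j * (1 - q) ^+ (k - j) * red_weight k j)).
by rewrite card_ord; apply: eq_bigr => j _; rewrite /bin_pmf !mulrA.
Qed.

Lemma majority_law_bern_odd q h :
  majority_law (bern q) (2 * h + 1) Red = binomial_cdf q (2 * h + 1) h.+1.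
Proof.
rewrite majority_law_bern_red (@big_cat_nat _ _ _ h.+1) //=; last by lia.
rewrite [\sum_(h.+1 <= i < _) _]big1_seq ?addr0 => [|j /andP[_]]; last first.
  rewrite mem_index_iota => /andP[le_hj _].
  by rewrite /red_weight ifF ?ifT ?mulr0 //; lia.
apply: eq_big_nat => j /andP[_ lt_jh].
by rewrite /red_weight ifT ?mulr1 //; lia.
Qed.

Lemma majority_law_bern_even q h :
  majority_law (bern q) (2 * h + 2) Red
    = binomial_cdf q (2 * h + 2) h.+1 + 2%:R^-1 * bin_pmf q (2 * h + 2) h.+1.
Proof.
rewrite majority_law_bern_red (@big_cat_nat _ _ _ h.+1) //=; last by lia.
rewrite [\sum_(h.+1 <= i < _) _](@big_cat_nat _ _ _ h.+2) //=; last by lia.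
rewrite big_nat1 [\sum_(h.+2 <= i < _) _]big1_seq ?addr0 => [|j /andP[_]]; last first.
  rewrite mem_index_iota => /andP[le_hj _].
  by rewrite /red_weight ifF ?ifT ?mulr0 //; lia.
congr (_ + _).
  apply: eq_big_nat => j /andP[_ lt_jh].
  by rewrite /red_weight ifT ?mulr1 //; lia.
by rewrite /red_weight ifF ?ifF 1?mulrC //; lia.
Qed.

Lemma majority_law_red_odd_even L h :
  \sum_b L b = 1 -> majority_law L (2 * h + 1) Red = majority_law L (2 * h + 2) Red.
Proof.
move=> sum_L; rewrite !(majority_law_bern _ sum_L).
rewrite majority_law_bern_odd majority_law_bern_even.
have -> : (2 * h + 2 = (2 * h + 1).+1)%N by lia.
by rewrite binomial_cdfS bin_pmfSS -bin_pmf_mid; field.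
Qed.

End MajorityLaw.

Arguments fair_majority {R k} seen b.

Lemma prob_not_blueE (R : fieldType) (V : finType)
    (K : {ffun V -> state} -> V -> state -> R) x u :
  (forall w, \sum_b K x w b = 1) -> prob_not_blue K x u = K x u Red.
Proof.
move=> sum_K; pose Q w b := (w == u) ==> (b != Blue).
rewrite /prob_not_blue /transition (eq_bigl (mem (family Q))) => [|y]; last first.
  apply/idP/familyP => [not_blue w | /(_ u)]; last by rewrite unfold_in eqxx.
  by rewrite unfold_in; apply/implyP => /eqP ->.
rewrite -bigA_distr_big_dep (bigD1 u) //= [\prod_(w | w != u) _]big1 ?mulr1 => [|w w_u].
  by rewrite (big_pred1 Red) // => b; rewrite /Q eqxx; case: b.
by rewrite -[RHS](sum_K w); apply: eq_bigl => b; rewrite /Q (negbTE w_u).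
Qed.

Section Kernels.
Variables (R : numFieldType) (V : finType) (e : rel V) (p : R).

Definition nbr_prob (u v : V) : R :=
  if v \in nbhd e u then #|nbhd e u|%:R^-1 else 0.

Definition edge_seen_law (x : {ffun V -> state}) (u : V) (b : state) : R :=
  \sum_(va : V * bool | (if va.2 then Blue else x va.1) == b) nbr_prob u va.1 * bern p va.2.

Definition node_seen_law (x : {ffun V -> state}) (u : V) (b : state) : R :=
  \sum_(v | x v == b) nbr_prob u v.

Lemma sample_w_prod k u (s : {ffun 'I_k -> V}) :
  sample_w R e u s = \prod_i nbr_prob u (s i).
Proof.
rewrite /sample_w; case: ifP => [/forallP s_nbr | /negbT/forallPn[i s_i]].
  rewrite (eq_bigr (fun=> #|nbhd e u|%:R^-1)) ?prodr_const ?card_ord // => i.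
  by rewrite /nbr_prob s_nbr.
by rewrite (bigD1 i) //= /nbr_prob (negbTE s_i) mul0r.
Qed.

Lemma sum_nbr_prob u : (exists w, e u w) -> \sum_v nbr_prob u v = 1.
Proof.
case=> w e_uw; rewrite /nbr_prob -big_mkcond sumr_const -[LHS]mulr_natr mulVf //.
by rewrite pnatr_eq0 -lt0n; apply/card_gt0P; exists w; rewrite inE.
Qed.

Lemma sum_sample_w k u :
  (exists w, e u w) -> \sum_(s : {ffun 'I_k -> V}) sample_w R e u s = 1.
Proof.
move=> u_nbr; under eq_bigr do rewrite sample_w_prod.
rewrite -(bigA_distr_bigA (fun (_ : 'I_k) v => nbr_prob u v)).
by rewrite big1 // => i _; apply: sum_nbr_prob.
Qed.

Lemma sum_edge_seen_law x u : (exists w, e u w) -> \sum_b edge_seen_law x u b = 1.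
Proof.
move=> u_nbr; rewrite sum_fibers -(pair_bigA _ (fun v a => nbr_prob u v * bern p a)) /=.
by under eq_bigr do rewrite -mulr_sumr sum_bern mulr1; apply: sum_nbr_prob.
Qed.

Lemma sum_node_seen_law x u : (exists w, e u w) -> \sum_b node_seen_law x u b = 1.
Proof. by move=> u_nbr; rewrite sum_fibers sum_nbr_prob. Qed.

Lemma edge_kernelE k x u b :
  edge_kernel e p k x u b = majority_law (edge_seen_law x u) k b.
Proof.
pose seen (va : V * bool) := if va.2 then Blue else x va.1.
transitivity (\sum_(s : {ffun 'I_k -> V}) \sum_(f : {ffun 'I_k -> bool})
    (sample_w R e u s * \prod_i bern p (f i))
    * fair_majority (fun i => if f i then Blue else x (s i)) b).
  apply: eq_bigr => s _; apply: eq_bigr => f _.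
  by rewrite /fair_majority mulr_sumr; apply: eq_bigr => c _; rewrite !mulrA.
rewrite sum_ffun_pair /majority_law /edge_seen_law.
rewrite -(sum_prod_ffun_comp (fun va => nbr_prob u va.1 * bern p va.2) seen
                             (fun g => fair_majority g b)).
apply: eq_bigr => sf _; congr (_ * _).
  by rewrite sample_w_prod -big_split; apply: eq_bigr => i _; rewrite !ffunE.
by apply: eq_fair_majority => i; rewrite !ffunE.
Qed.

Lemma node_kernelE k x u b : (exists w, e u w) ->
  node_kernel e p k x u b
    = p * (if Blue == b then 1 else 0) + (1 - p) * majority_law (node_seen_law x u) k b.
Proof.
move=> u_nbr; rewrite /node_kernel.
transitivity (\sum_(s : {ffun 'I_k -> V})
    (sample_w R e u s * (p * (if Blue == b then 1 else 0))
     + (1 - p) * (sample_w R e u s * fair_majority (fun i => x (s i)) b))).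
  apply: eq_bigr => s _; rewrite big_bool /=; congr (_ + _).
    by rewrite -mulr_suml -mulr_sumr sum_bern mulr1 mulrA.
  rewrite /fair_majority !mulr_sumr; apply: eq_bigr => c _.
  by rewrite !mulrA (mulrC (1 - p)).
rewrite big_split /= -mulr_suml sum_sample_w // mul1r -mulr_sumr.
congr (_ + _ * _); under eq_bigr do rewrite sample_w_prod.
rewrite /majority_law /node_seen_law.
rewrite -(sum_prod_ffun_comp (nbr_prob u) x (fun g => fair_majority g b)).
by apply: eq_bigr => s _; congr (_ * _); apply: eq_fair_majority => i; rewrite ffunE.
Qed.

Lemma sum_edge_kernel k x u : (exists w, e u w) -> \sum_b edge_kernel e p k x u b = 1.
Proof.
move=> u_nbr; under eq_bigr do rewrite edge_kernelE.
exact/sum_majority_law/sum_edge_seen_law.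
Qed.

Lemma sum_node_kernel k x u : (exists w, e u w) -> \sum_b node_kernel e p k x u b = 1.
Proof.
move=> u_nbr; under eq_bigr do rewrite node_kernelE //.
rewrite big_split /= -mulr_sumr -mulr_sumr sum_majority_law ?sum_node_seen_law //.
by rewrite big_bool /=; ring.
Qed.

Lemma edge_kernel_red_odd_even h x u : (exists w, e u w) ->
  edge_kernel e p (2 * h + 1) x u Red = edge_kernel e p (2 * h + 2) x u Red.
Proof.
move=> u_nbr; rewrite !edge_kernelE.
exact/majority_law_red_odd_even/sum_edge_seen_law.
Qed.

Lemma node_kernel_red_odd_even h x u : (exists w, e u w) ->
  node_kernel e p (2 * h + 1) x u Red = node_kernel e p (2 * h + 2) x u Red.
Proof.
move=> u_nbr; rewrite !node_kernelE //.
by rewrite majority_law_red_odd_even ?sum_node_seen_law.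
Qed.

End Kernels.

Theorem proposition3p4 (R : realFieldType) (V : finType) (e : rel V)
  (e_sym : symmetric e) (e_irr : irreflexive e)
  (no_isolated : forall v : V, exists w : V, e v w)
  (p : R) (hp0 : 0 <= p) (hp1 : p <= 1)
  (x : {ffun V -> state}) (u : V) (h : nat) :
  prob_not_blue (edge_kernel e p (2 * h + 1)) x u
    = prob_not_blue (edge_kernel e p (2 * h + 2)) x u
  /\ prob_not_blue (node_kernel e p (2 * h + 1)) x u
    = prob_not_blue (node_kernel e p (2 * h + 2)) x u.
Proof.
have edge_total k w := sum_edge_kernel p k x (no_isolated w).
have node_total k w := sum_node_kernel p k x (no_isolated w).
rewrite !prob_not_blueE //; split.
- exact: edge_kernel_red_odd_even.
- exact: node_kernel_red_odd_even.
Qed.
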